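(* Let $w\ge 2$ and $n$ be positive integers such that $n\equiv 1\pmod{w-1}$ and $n(n-1)-n(w-1)(w-2)\equiv (2k+1)(w-1)\pmod{w(w-1)}$ for some integer $k\in[0,\frac{w-3}{2}]$. Let $B(n)=\left\lfloor\frac{n(n-1-(w-1)(w-2))}{w(w-1)}\right\rfloor$. If $\mathcal C$ is a balanced $(n,2w-2,w)_3$ code of size $B(n)+n$, then $\mathcal C$ contains a codeword which is neither of type $1^w$ nor of type $1^{w-2}2^1$.
   Context: A ternary code of length $n$ is a subset of $\{0,1,2\}^n$; the $\ell_1$-distance is $\sum_i|u_i-v_i|$ and the $\ell_1$-weight of $u$ is its distance to $0$. An $(n,d,w)_3$ code has all codewords of $\ell_1$-weight $w$ and pairwise $\ell_1$-distance at least $d$. A codeword is of type $1^a2^b$ if exactly $a$ of its coordinates equal $1$ and exactly $b$ equal $2$ (so $a+2b=w$). The support of $u$ is $\{i:u_i\ne0\}$. A code is balanced if the supports of its codewords, viewed as vertex sets of cliques in $K_n$ on $[n]$, form an edge-decomposition of $K_n$. *)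

From mathcomp Require Import all_boot all_order all_algebra.
Set Implicit Arguments. Unset Strict Implicit. Unset Printing Implicit Defensive.

Definition word (n : nat) := {ffun 'I_n -> 'I_3}.

(* l1-distance: sum_i |u_i - v_i|  (|a-b| = (a-b)+(b-a) with truncated nat subtraction) *)
Definition l1dist n (u v : word n) : nat :=
  \sum_(i < n) ((u i : nat) - v i + (v i - u i))%N.

Definition l1weight n (u : word n) : nat := \sum_(i < n) (u i : nat).

Definition supp n (u : word n) : {set 'I_n} := [set i | (u i : nat) != 0%N].

Definition is_type n (u : word n) (a b : nat) : bool :=
  (#|[set i | (u i : nat) == 1%N]| == a) && (#|[set i | (u i : nat) == 2%N]| == b).

Definition is_code n (d w : nat) (C : {set word n}) : Prop :=
  (forall u, u \in C -> l1weight u = w) /\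
  (forall u v, u \in C -> v \in C -> u != v -> d <= l1dist u v).

(* balanced: the supports (as cliques of K_n) edge-decompose K_n, i.e. every
   edge {i,j} (i <> j) lies in the support of exactly one codeword. *)
Definition balanced n (C : {set word n}) : Prop :=
  forall i j : 'I_n, i != j ->
    #|[set u in C | (i \in supp u) && (j \in supp u)]| = 1%N.

From mathcomp Require Import all_boot all_order all_algebra.
From mathcomp Require Import zify.
Import GRing.Theory Num.Theory.

Set Implicit Arguments.
Unset Strict Implicit.
Unset Printing Implicit Defensive.

(* Counting ordered pairs of distinct coordinates lying in a common support,
   balancedness gives n(n-1) = sum_c |supp c| (|supp c| - 1).  If every codeword
   had type 1^w or 1^(w-2)2^1, and a of them type 1^w, this would read
   n(n-1) = |C|(w-1)(w-2) + 2(w-1)a.  Substituting |C| = B(n) + n and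
   n(n-1) - n(w-1)(w-2) = B(n) w(w-1) + (2k+1)(w-1) leaves
   (w-1)(2(a - B(n)) - (2k+1)) = 0: an even number would equal an odd one. *)

Section CliqueDecomposition.

Variables (T I : finType) (P : {pred I}) (S : I -> {set T}).

Lemma card_ordered_pairs (A : {set T}) :
  (\sum_x \sum_y [&& x \in A, y \in A & y != x] = #|A| * #|A|.-1)%N.
Proof.
rewrite -sum_nat_const (bigID (mem A)) /= [X in (_ + X)%N]big1 ?addn0.
  apply: eq_bigr => x Ax; rewrite (cardsD1 x A) Ax -sum1_card [RHS]big_mkcond /=.
  by apply: eq_bigr => y _; rewrite !inE andbC; case: (_ && _).
by move=> x /negbTE Ax; apply: big1 => y _; rewrite Ax.
Qed.

Hypothesis clique_decomposition :
  forall x y, x != y -> #|[set i in P | (x \in S i) && (y \in S i)]| = 1%N.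

Lemma sum_card_clique_decomposition :
  (\sum_(i in P) #|S i| * #|S i|.-1 = #|T| * #|T|.-1)%N.
Proof.
have covered x y : (\sum_(i in P) [&& x \in S i, y \in S i & y != x] = (y != x))%N.
  have [<-|yx] := eqVneq y x; first by rewrite big1 // => i _; rewrite !andbF.
  rewrite /= -(@clique_decomposition x y) 1?eq_sym // -sum1_card.
  rewrite big_mkcond [RHS]big_mkcond; apply: eq_bigr => i _.
  by rewrite !inE andbT; case: (i \in P) => //; case: (_ && _).
under eq_bigr => i _ do rewrite -card_ordered_pairs.
rewrite exchange_big /= -sum_nat_const; apply: eq_bigr => x _.
rewrite exchange_big /= (eq_bigr _ (fun y _ => covered x y)).
by rewrite -(cardC1 x) -sum1_card [RHS]big_mkcond; apply: eq_bigr => y _; rewrite !inE.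
Qed.

End CliqueDecomposition.

Lemma card_supp_type n (u : word n) a b : is_type u a b -> #|supp u| = (a + b)%N.
Proof.
case/andP=> /eqP <- /eqP <-; rewrite -cardsUI.
have -> : [set i | (u i : nat) == 1%N] :&: [set i | (u i : nat) == 2%N] = set0.
  by apply/setP=> i; rewrite !inE; case: (u i : nat) => [|[|[]]].
by rewrite cards0 addn0; apply: eq_card => i; rewrite !inE; case: (u i) => [[|[|[|]]]].
Qed.

Lemma balanced_two_types_count n w (C : {set word n}) :
  (2 <= w)%N -> balanced C ->
  {in C, forall c, is_type c w 0 || is_type c (w - 2) 1} ->
  (n * n.-1 =
     #|C| * ((w - 1) * (w - 2)) + 2 * (w - 1) * #|[set c in C | is_type c w 0]|)%N.
Proof.
case: w => [|[|v]] // _ bal; rewrite !subSS !subn0 => two_types.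
have card_supp c : c \in C ->
    (#|supp c| * #|supp c|.-1 = v.+1 * v + 2 * v.+1 * is_type c v.+2 0)%N.
  move/two_types; case: (boolP (is_type c v.+2 0)) => [|_].
    by move/card_supp_type -> => _ /=; nia.
  by move/card_supp_type -> => /=; nia.
rewrite -{1 2}(card_ord n) -(sum_card_clique_decomposition bal) (eq_bigr _ card_supp).
rewrite big_split /= sum_nat_const -big_distrr /= -sum1dep_card big_mkcondr /=.
by congr (_ + _ * _); apply: eq_bigr => c _; case: is_type.
Qed.

Local Open Scope ring_scope.

Lemma double_count_parity (d n N a q k : int) :
  n * (n - 1) = N * (d * (d - 1)) + 2 * d * a ->
  n * (n - 1) - n * (d * (d - 1)) = q * ((d + 1) * d) + (2 * k + 1) * d ->
  N = q + n -> d = 0.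
Proof.
move=> count div card_N.
have : d * (2 * (a - q) - (2 * k + 1)) = 0 by lia.
by move/eqP; rewrite mulf_eq0 => /orP[/eqP //|/eqP]; lia.
Qed.

Lemma two_type_count_contradiction (w n k N a : nat) :
  (2 <= w)%N -> (0 < n)%N -> (2 * k + 1 < w)%N ->
  ((n * (n - 1))%:Z - (n * (w - 1) * (w - 2))%:Z
     = ((2 * k + 1) * (w - 1))%:Z %[mod (w * (w - 1))%:Z])%Z ->
  N%:Z = divz (n%:Z * (n%:Z - 1 - ((w - 1) * (w - 2))%:Z)) (w * (w - 1))%:Z + n%:Z ->
  (n * n.-1 = N * ((w - 1) * (w - 2)) + 2 * (w - 1) * a)%N ->
  False.
Proof.
case: w => [|[|v]] // _; case: n => [|m] // _; rewrite !subSS !subn0 /=.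
set X := _ * _; set M := (v.+2 * v.+1)%N%:Z => k_small mod_eq card_N count.
have X_def : X = (m.+1 * m)%N%:Z - (m.+1 * v.+1 * v)%N%:Z by rewrite /X; lia.
have X_div : X = (X %/ M)%Z * M + ((2 * k + 1) * v.+1)%N%:Z.
  rewrite {1}(divz_eq X M) {2}X_def mod_eq modz_small //.
  by rewrite /M ltz_nat ltn_pmul2r.
move: (X %/ M)%Z card_N X_div => q card_N X_div.
suff : v.+1%:Z = 0 by [].
apply: (double_count_parity (n := m.+1%:Z) (N := N%:Z) (a := a%:Z) (q := q) (k := k%:Z)) card_N.
  by lia.
transitivity X; first by rewrite X_def; lia.
by rewrite {1}X_div /M; lia.
Qed.

Theorem lemma4 (w n : nat) (C : {set word n}) :
  (2 <= w)%N -> (0 < n)%N ->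
  n = 1 %[mod w.-1] ->
  (exists k : nat, (2 * k + 1 <= w - 2)%N /\
     ((n * (n - 1))%:Z - (n * (w - 1) * (w - 2))%:Z
        = ((2 * k + 1) * (w - 1))%:Z %[mod (w * (w - 1))%:Z])%Z) ->
  is_code (2 * w - 2) w C ->
  balanced C ->
  (#|C|%:Z = divz (n%:Z * (n%:Z - 1 - ((w - 1) * (w - 2))%:Z)) (w * (w - 1))%:Z
              + n%:Z)%R ->
  exists2 c, c \in C & ~~ is_type c w 0 && ~~ is_type c (w - 2) 1.
Proof.
move=> w_ge2 n_gt0 _ [k [k_small mod_eq]] _ bal card_C.
case: (boolP [exists c in C, ~~ is_type c w 0 && ~~ is_type c (w - 2) 1]).
  by move/exists_inP.
rewrite negb_exists_in => /forall_inP only_two_types; exfalso.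
have two_types : {in C, forall c, is_type c w 0 || is_type c (w - 2) 1}.
  by move=> c /only_two_types; rewrite negb_and !negbK.
apply: (two_type_count_contradiction w_ge2 n_gt0 _ mod_eq card_C).
  by lia.
exact: balanced_two_types_count w_ge2 bal two_types.
Qed.
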